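(* Let $d \ge 1$, let $\mathcal{X}$ be a normed space (e.g. $\mathbb{R}^{w\times h\times c}$), and let $G:\mathbb{R}^d\to\mathcal{X}$ be a fixed (pre-trained generator) function. Fix constants $L \ge 0$, $\epsilon>0$ and $\epsilon'>\epsilon$. For each $n\ge 1$, let $\mathbf{z}^{(1)},\dots,\mathbf{z}^{(n)}$ be i.i.d. samples from the standard Gaussian $\mathcal{N}(0, I_d)$, and let $\mathbf{z}\sim\mathcal{N}(0,I_d)$ be independent of them. Let $I_n:\mathcal{X}\to\mathbb{R}^d$ be an inverter function (which may depend on $\mathbf{z}^{(1)},\dots,\mathbf{z}^{(n)}$ but not on $\mathbf{z}$) such that the composite $I_n\circ G:\mathbb{R}^d\to\mathbb{R}^d$ is $L$-Lipschitz and $$\|I_n(G(\mathbf{z}^{(i)}))-\mathbf{z}^{(i)}\|<\epsilon \quad \text{for all } i\in\{1,\dots,n\}.$$ Then $$\Pr\big(\|I_n(G(\mathbf{z}))-\mathbf{z}\|<\epsilon'\big)=1-o(1)\quad\text{as } n\to\infty,$$ where the probability is over $(\mathbf{z}^{(1)},\dots,\mathbf{z}^{(n)},\mathbf{z})$. That is, with high probability $I_n$ approximately inverts $G$ on a fresh latent sample.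
   Context: Norms on $\mathbb{R}^d$ are Euclidean. The Lipschitz constant $L$ is a fixed constant not depending on $n$. $\mathcal{N}(0,I_d)$ denotes the standard $d$-dimensional Gaussian distribution. *)

From HB Require Import structures.
From mathcomp Require Import all_boot all_order all_algebra.
From mathcomp Require Import all_classical all_reals all_analysis.
Set Implicit Arguments. Unset Strict Implicit. Unset Printing Implicit Defensive.
Import Order.TTheory GRing.Theory Num.Theory.
Import numFieldNormedType.Exports.
Local Open Scope classical_set_scope.
Local Open Scope ring_scope.

(* Euclidean norm on R^d, vectors represented as row vectors 'rV[R]_d.
   (The library's canonical norm on matrices is the max norm, so we
   define the Euclidean one explicitly.) *)
Definition enorm {R : realType} {d : nat} (v : 'rV[R]_d) : R :=
  Num.sqrt (\sum_(k < d) v ord0 k ^+ 2).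

(* Mutual independence of a finite family of real random variables:
   each is measurable and the product rule holds for every choice of
   Borel sets (this implies the product rule for every subfamily, by
   choosing the whole space for the other indices). *)
Definition mutually_independent {dT : measure_display} {T : measurableType dT}
  {R : realType} (P : probability T R) {I : finType} (X : I -> T -> R) : Prop :=
  (forall i, measurable_fun [set: T] (X i)) /\
  forall B : I -> set R, (forall i, measurable (B i)) ->
    P (\bigcap_(i in [set: I]) (X i @^-1` B i)) =
    (\prod_(i : I) P (X i @^-1` B i))%E.

Definition std_normal_rv {dT : measure_display} {T : measurableType dT}
  {R : realType} (P : probability T R) (X : T -> R) : Prop :=
  forall B : set R, measurable B -> P (X @^-1` B) = normal_prob 0 1 B.

(* The family of random vectors W j : T -> R^d (j : J) is i.i.d. with law
   N(0, I_d): by definition of N(0, I_d), all coordinates of all the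
   vectors form a single family of mutually independent N(0,1) variables. *)
Definition iid_std_gaussian_vectors {dT : measure_display} {T : measurableType dT}
  {R : realType} (P : probability T R) {J : finType} {d : nat}
  (W : J -> T -> 'rV[R]_d) : Prop :=
  mutually_independent P (fun jk : J * 'I_d => fun w => W jk.1 w ord0 jk.2) /\
  forall (j : J) (k : 'I_d), std_normal_rv P (fun w => W j w ord0 k).

(* The training samples z^(1..n) (index Some i) together with the fresh
   sample z (index None). *)
Definition all_samples {T : Type} {V : Type} (n : nat)
  (Zs : 'I_n -> T -> V) (Z : T -> V) : option 'I_n -> T -> V :=
  fun j => match j with Some i => Zs i | None => Z end.

From HB Require Import structures.
From mathcomp Require Import all_boot all_order all_algebra.
From mathcomp Require Import all_classical all_reals all_analysis.
From mathcomp Require Import ring lra.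
Import Order.TTheory GRing.Theory Num.Theory.
Import numFieldNormedType.Exports.
Local Open Scope classical_set_scope.
Local Open Scope ring_scope.

(* Cut the cube [-M, M)^d into m^d cells so small that two points of one cell
   are closer than delta = (eps' - eps) / (L + 1).  If the fresh sample z shares
   a cell with a training sample z_i, then
   |I(G z) - z| <= L |z - z_i| + |I(G z_i) - z_i| + |z_i - z| < eps'.
   So failure forces z out of the cube, or z into a cell containing no z_i; a
   cell of Gaussian mass q is hit by z and missed by all z_i with probability
   q (1 - q)^n <= 1/(n+1).  Hence the failure probability is at most
   P(z outside the cube) + m^d/(n+1); let n -> oo, then M -> oo. *)

Lemma cauchy_schwarz_sum (R : realFieldType) (I : finType) (a b : I -> R) :
  (\sum_i a i * b i) ^+ 2 <= (\sum_i a i ^+ 2) * (\sum_i b i ^+ 2).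
Proof.
set S := \sum_i a i ^+ 2; set S' := \sum_i b i ^+ 2; set C := \sum_i a i * b i.
have SS'E : \sum_i \sum_j a i ^+ 2 * b j ^+ 2 = S * S'.
  by rewrite big_distrl; apply: eq_bigr => i _; rewrite big_distrr.
have S'SE : \sum_i \sum_j a j ^+ 2 * b i ^+ 2 = S * S'.
  rewrite mulrC big_distrl; apply: eq_bigr => i _; rewrite big_distrr.
  by apply: eq_bigr => j _; rewrite mulrC.
have CCE : \sum_i \sum_j (a i * b i) * (a j * b j) = C ^+ 2.
  by rewrite expr2 big_distrl; apply: eq_bigr => i _; rewrite big_distrr.
have lagrange : \sum_i \sum_j (a i * b j - a j * b i) ^+ 2 = (S * S' - C ^+ 2) *+ 2.
  transitivity (\sum_i (\sum_j a i ^+ 2 * b j ^+ 2 + \sum_j a j ^+ 2 * b i ^+ 2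
      - (\sum_j (a i * b i) * (a j * b j)) *+ 2)).
    apply: eq_bigr => i _; rewrite -sumrMnl -big_split -sumrB.
    by apply: eq_bigr => j _ /=; ring.
  by rewrite sumrB big_split /= sumrMnl SS'E S'SE CCE mulr2n; ring.
have : 0 <= (S * S' - C ^+ 2) *+ 2.
  by rewrite -lagrange; do 2!apply: sumr_ge0 => ? _; exact: sqr_ge0.
by rewrite -mulr_natr pmulr_lge0 // subr_ge0.
Qed.

Section EuclideanNorm.
Context {R : realType} {d : nat}.
Implicit Types u v : 'rV[R]_d.

Lemma enorm_ge0 u : 0 <= enorm u.
Proof. exact: sqrtr_ge0. Qed.

Lemma enormN u : enorm (- u) = enorm u.
Proof. by rewrite /enorm; congr Num.sqrt; apply: eq_bigr => k _; rewrite mxE sqrrN. Qed.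

Lemma enorm_distrC u v : enorm (u - v) = enorm (v - u).
Proof. by rewrite -enormN opprB. Qed.

Lemma ler_enormD u v : enorm (u + v) <= enorm u + enorm v.
Proof.
rewrite /enorm.
set A := \sum_k u ord0 k ^+ 2; set B := \sum_k v ord0 k ^+ 2.
set C := \sum_k u ord0 k * v ord0 k.
have A0 : 0 <= A by apply: sumr_ge0 => k _; exact: sqr_ge0.
have B0 : 0 <= B by apply: sumr_ge0 => k _; exact: sqr_ge0.
have CAB : C <= Num.sqrt A * Num.sqrt B.
  rewrite -sqrtrM // (le_trans (ler_norm C)) // -sqrtr_sqr ler_sqrt ?mulr_ge0 //.
  exact: cauchy_schwarz_sum.
have -> : \sum_k (u + v) ord0 k ^+ 2 = A + B + C *+ 2.
  rewrite -sumrMnl -!big_split; apply: eq_bigr => k _ /=; rewrite mxE; ring.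
rewrite -[X in _ <= X]ger0_norm ?addr_ge0 ?sqrtr_ge0 //.
rewrite -sqrtr_sqr ler_sqrt ?sqr_ge0 // -{1}(sqr_sqrtr A0) -{1}(sqr_sqrtr B0).
move: CAB; set a := Num.sqrt A; set b := Num.sqrt B; nra.
Qed.

Lemma enorm_le_coord u (h : R) : 0 <= h -> (forall k, `|u ord0 k| <= h) ->
  enorm u <= d%:R * h.
Proof.
move=> h0 hu; rewrite /enorm -[d%:R * h]ger0_norm ?mulr_ge0 //.
rewrite -sqrtr_sqr ler_sqrt ?sqr_ge0 //.
apply: (@le_trans _ _ (\sum_(k < d) h ^+ 2)).
  by apply: ler_sum => k _; rewrite -real_normK ?num_real // lerXn2r ?nnegrE.
rewrite sumr_const card_ord exprMn -[h ^+ 2 *+ d]mulr_natl.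
apply: ler_wpM2r; first exact: sqr_ge0.
by case: d => [|n]; rewrite ?expr2 ?mul0r // ler_peMl // ler1n.
Qed.

End EuclideanNorm.

Section ElementaryBounds.
Context {R : realFieldType}.
Implicit Types p r : R.

Lemma bernoulli_mul_le1 p n : 0 <= p <= 1 -> (1 + n%:R * p) * (1 - p) ^+ n <= 1.
Proof.
case/andP=> p0 p1; elim: n => [|n IH]; first by rewrite mul0r addr0 expr0 mulr1.
have q0 : 0 <= (1 - p) ^+ n by rewrite exprn_ge0 // subr_ge0.
rewrite exprS -natr1 (le_trans _ IH) //.
have -> : (1 + (n%:R + 1) * p) * ((1 - p) * (1 - p) ^+ n) =
   (1 + n%:R * p) * (1 - p) ^+ n - (n%:R + 1) * p ^+ 2 * (1 - p) ^+ n by ring.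
by rewrite lerBlDr lerDl !mulr_ge0 ?sqr_ge0 ?addr_ge0.
Qed.

Lemma mul_exprBr_le_invS p n : 0 <= p <= 1 -> p * (1 - p) ^+ n <= n.+1%:R^-1.
Proof.
move=> p01; have /andP[p0 p1] := p01.
rewrite -[n.+1%:R^-1]mul1r ler_pdivlMr ?ltr0n // (le_trans _ (bernoulli_mul_le1 p n p01)) //.
have q0 : 0 <= (1 - p) ^+ n by rewrite exprn_ge0 // subr_ge0.
rewrite -natr1; set q := (1 - p) ^+ n in q0 *.
have : 0 <= q * (1 - p) by rewrite mulr_ge0 // subr_ge0.
nra.
Qed.

Lemma subr1_exprn_le r n : 0 <= r <= 1 -> 1 - r ^+ n <= n%:R * (1 - r).
Proof.
case/andP=> r0 r1; elim: n => [|n IH]; first by rewrite expr0 subrr mul0r.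
have -> : 1 - r ^+ n.+1 = (1 - r ^+ n) + r ^+ n * (1 - r) by rewrite exprS; ring.
by rewrite -natr1 mulrDl mul1r lerD // ler_piMl ?subr_ge0 ?exprn_ile1.
Qed.

End ElementaryBounds.

Section PatternEvents.
Context {dT : measure_display} {T : measurableType dT} {R : realType}
  {P : probability T R} {I : eqType} {A : I -> set T}.

Definition pattern (s t : seq I) : set T :=
  [set w | (forall i, i \in s -> A i w) /\ (forall i, i \in t -> ~ A i w)].

Lemma pattern_consr s j t : pattern s (j :: t) = pattern s t `\` A j.
Proof.
apply/seteqP; split => w /=.
  move=> [As At]; split; first split => //.
    by move=> i it; apply: At; rewrite in_cons it orbT.
  by apply: At; rewrite in_cons eqxx.
move=> [[As At] nAj]; split => // i; rewrite in_cons => /orP[/eqP->//|]; exact: At.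
Qed.

Lemma pattern_consl s j t : pattern (j :: s) t = pattern s t `&` A j.
Proof.
apply/seteqP; split => w /=.
  move=> [As At]; split; first split => //.
    by move=> i it; apply: As; rewrite in_cons it orbT.
  by apply: As; rewrite in_cons eqxx.
move=> [[As At] Aj]; split => // i; rewrite in_cons => /orP[/eqP->//|]; exact: As.
Qed.

Hypothesis mA : forall i, measurable (A i).

Lemma pattern_measurable s t : measurable (pattern s t).
Proof.
elim: t => [|j t IH]; last by rewrite pattern_consr; apply: measurableD.
elim: s => [|i s IH]; last by rewrite pattern_consl; apply: measurableI.
by rewrite [pattern _ _](_ : _ = setT) //; apply/seteqP; split => w //= _; split.
Qed.

(* The hypothesis says that the events [A i] are independent, each of
   probability [q]. *)
Lemma pattern_prob (q : R) :
  (forall s, uniq s -> P (pattern s [::]) = (q ^+ size s)%:E) ->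
  forall t s, uniq (s ++ t) ->
  P (pattern s t) = (q ^+ size s * (1 - q) ^+ size t)%:E.
Proof.
move=> hits; elim=> [|j t IH] s; first by rewrite cats0 => us; rewrite hits // mulr1.
move=> ust.
have us_t : uniq (s ++ t).
  by move: ust; rewrite -cat1s uniq_catCA cat_uniq => /and3P[].
have ujs_t : uniq ((j :: s) ++ t) by move: ust; rewrite -cat1s uniq_catCA.
have PD : P (pattern s t `\` A j) = (P (pattern s t) - P (pattern s t `&` A j))%E.
  apply: measureD => //; first exact: pattern_measurable.
  exact: le_lt_trans (probability_le1 P (pattern_measurable s t)) (ltry _).
rewrite pattern_consr PD -pattern_consl (IH s us_t) (IH _ ujs_t) -EFinB /= exprS.
by congr (_%:E); rewrite exprS; ring.
Qed.

End PatternEvents.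
Arguments pattern {dT T I} A s t.

Lemma measure_bigsetU_le {dT : measure_display} {T : measurableType dT}
  {R : realType} (mu : {measure set T -> \bar R}) {I : Type} (s : seq I)
  {F : I -> set T} : (forall i, measurable (F i)) ->
  (mu (\big[setU/set0]_(i <- s) F i) <= \sum_(i <- s) mu (F i))%E.
Proof.
move=> mF; elim: s => [|i s IH]; first by rewrite !big_nil measure0.
rewrite !big_cons (le_trans (measureU2 mu (mF i) (bigsetU_measurable _ _))) //.
exact: leeD.
Qed.

Lemma normal_prob_fineK {R : realType} {B : set R} : measurable B ->
  (fine (normal_prob 0 1 B))%:E = normal_prob 0 1 B.
Proof.
move=> mB; apply: fineK; rewrite ge0_fin_numE ?measure_ge0 //.
exact: (le_lt_trans (probability_le1 (normal_prob (0:R) 1) mB) (ltry _)).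
Qed.

Lemma normal_prob_fine_01 {R : realType} {B : set R} : measurable B ->
  0 <= fine (normal_prob 0 1 B) <= 1.
Proof.
by move=> mB; rewrite -!lee_fin normal_prob_fineK // measure_ge0 probability_le1.
Qed.

Lemma normal_prob_itv_cvg1 (R : realType) :
  (fun i : nat => fine (normal_prob (0:R) 1 `[- i%:R, i%:R[)) @ \oo --> (1:R).
Proof.
set F := fun i : nat => `[- (i%:R : R), i%:R[%classic.
have mF i : measurable (F i) by exact: measurable_itv.
have UF : \bigcup_i F i = setT.
  apply/seteqP; split => x // _; exists (Num.truncn `|x|).+1 => //.
  have := truncnS_gt `|x|; rewrite /F /= in_itv /= ltr_norml => /andP[a b].
  by rewrite b ltW.
have F_nd : {homo F : n m / (n <= m)%N >-> (n <= m)%O}.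
  move=> a b ab; apply/subsetPset => x; rewrite /F /= !in_itv /= => /andP[x1 x2].
  have : (a%:R : R) <= b%:R by rewrite ler_nat.
  move=> hab; apply/andP; split; lra.
have P1 : normal_prob (0:R) 1 setT = 1%E := probability_setT _.
have : (fun i => normal_prob (0:R) 1 (F i)) @ \oo --> 1%E.
  rewrite -P1 -UF.
  exact: (@nondecreasing_cvg_mu _ _ _ (normal_prob (0:R) 1) F mF
    (bigcupT_measurable _ mF) F_nd).
by case/fine_cvgP.
Qed.

Section GaussianBox.
Context {dT : measure_display} {T : measurableType dT} {R : realType}
  {P : probability T R} {J : finType} {d : nat} {W : J -> T -> 'rV[R]_d}
  {B : 'I_d -> set R}.
Hypothesis W_iid : iid_std_gaussian_vectors P W.
Hypothesis mB : forall k, measurable (B k).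

Definition box_event (j : J) : set T := [set w | forall k, B k (W j w ord0 k)].
Definition gaussian_box_prob : R := \prod_k fine (normal_prob 0 1 (B k)).

Lemma box_event_measurable j : measurable (box_event j).
Proof.
have [[mW _] _] := W_iid.
rewrite [box_event j](_ : _ = \bigcap_(k in [set: 'I_d])
    ((fun w => W j w ord0 k) @^-1` B k)); last first.
  by apply/seteqP; split => w /= wB k; [move=> _|]; exact: wB.
apply: fin_bigcap_measurable; first exact: finite_finset.
by move=> k _; rewrite -[_ @^-1` _]setTI; exact: mW (j, k) measurableT _ (mB k).
Qed.

Lemma gaussian_box_prob01 : 0 <= gaussian_box_prob <= 1.
Proof.
rewrite /gaussian_box_prob; elim/big_rec: _ => [|k x _ /andP[x0 x1]].
  by rewrite ler01 lexx.
have /andP[a0 a1] := normal_prob_fine_01 (mB k).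
by rewrite mulr_ge0 //= mulr_ile1.
Qed.

Lemma box_event_hits s :
  uniq s -> P (pattern box_event s [::]) = (gaussian_box_prob ^+ size s)%:E.
Proof.
move=> us; have [[_ hprod] hstd] := W_iid.
pose C := fun jk : J * 'I_d => if jk.1 \in s then B jk.2 else setT.
have mC jk : measurable (C jk) by rewrite /C; case: ifP.
have -> : pattern box_event s [::] =
    \bigcap_(jk in [set: J * 'I_d]) ((fun w => W jk.1 w ord0 jk.2) @^-1` C jk).
  apply/seteqP; split => w /=.
    by move=> [h _] [j k] _; rewrite /C /=; case: ifP => // js; exact: h.
  move=> h; split => // j js k; have := h (j, k) I; by rewrite /C /= js.
rewrite hprod // (eq_bigr (fun jk => (if jk.1 \in s
    then fine (normal_prob 0 1 (B jk.2)) else 1)%:E)); last first.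
  move=> [j k] _; rewrite /C /=; case: ifP => _.
    by rewrite normal_prob_fineK // (hstd j k).
  by rewrite preimage_setT probability_setT.
rewrite prodEFin -(pair_bigA _ (fun j k => if j \in s
    then fine (normal_prob 0 1 (B k)) else 1)) /=.
rewrite (eq_bigr (fun j => if j \in s then gaussian_box_prob else 1)).
  by rewrite -big_mkcond prodr_const (card_uniqP us).
by move=> j _; case: ifP => _ //; rewrite big1.
Qed.

End GaussianBox.
Arguments box_event {dT T R J d} W B j.
Arguments gaussian_box_prob {R d} B.

Lemma mem_subinterval (R : realType) (a h x : R) (m : nat) :
  0 < h -> a <= x < a + m%:R * h ->
  exists i : 'I_m, a + i%:R * h <= x < a + i.+1%:R * h.
Proof.
move=> h0 /andP[ax xam].
set y := (x - a) / h.
have y0 : 0 <= y by rewrite divr_ge0 ?subr_ge0 // ltW.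
have ym : y < m%:R by rewrite ltr_pdivrMr // ltrBlDl.
have yh : y * h = x - a by rewrite divfK // gt_eqF.
have [t1 t2] := andP (truncn_itv y0).
have tm : (Num.truncn y < m)%N by rewrite truncn_lt_nat.
exists (Ordinal tm) => /=.
move: t1 t2 yh; set t := (Num.truncn y)%:R; set t' := (Num.truncn y).+1%:R.
move=> t1 t2 yh; apply/andP; split; nra.
Qed.

Lemma cvg_to1_of_deficit_le (R : realType) (u : nat -> R) :
  (forall n, u n <= 1) ->
  (forall e, 0 < e -> exists a K, a <= e /\ forall n, 1 - u n <= a + K / n.+1%:R) ->
  u @ \oo --> (1 : R).
Proof.
move=> u_le1 deficit; apply/cvgrPdist_le => e e0.
have [a [K [ae uK]]] := deficit (e / 2) (divr_gt0 e0 (ltr0Sn _ 1)).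
near=> n.
have Kn : K / n.+1%:R <= e / 2.
  have : 2 * K / e <= n%:R by near: n; exact: nbhs_infty_ger.
  rewrite ler_pdivrMr // => Kne.
  rewrite ler_pdivrMr ?ltr0n //.
  nra.
rewrite ger0_norm ?subr_ge0 // (le_trans (uK n)) // [e]splitr lerD //.
Unshelve. all: by end_near.
Qed.

Section ApproximateInversion.
Context {R : realType} {d : nat} {X : normedModType R} {G : 'rV[R]_d -> X}
  {L eps eps' : R} {dT : measure_display} {T : measurableType dT}
  {P : probability T R} {Zs : forall n : nat, 'I_n -> T -> 'rV[R]_d}
  {Z : nat -> T -> 'rV[R]_d} {Inv : forall n : nat, ('I_n -> 'rV[R]_d) -> X -> 'rV[R]_d}.
Hypotheses (d_gt0 : (0 < d)%N) (L_ge0 : 0 <= L) (eps_lt : eps < eps').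
Hypothesis samples_iid : forall n, iid_std_gaussian_vectors P (all_samples (Zs n) (Z n)).
Hypothesis Inv_lipschitz : forall n (w : T) (x y : 'rV[R]_d),
  enorm (Inv n (fun i => Zs n i w) (G x) - Inv n (fun i => Zs n i w) (G y))
    <= L * enorm (x - y).
Hypothesis Inv_train : forall n (w : T) (i : 'I_n),
  enorm (Inv n (fun i => Zs n i w) (G (Zs n i w)) - Zs n i w) < eps.

Definition good n :=
  [set w | enorm (Inv n (fun i => Zs n i w) (G (Z n w)) - Z n w) < eps'].
Hypothesis good_measurable : forall n, measurable (good n).

Definition delta := (eps' - eps) / (L + 1).

Lemma delta_gt0 : 0 < delta.
Proof. by rewrite divr_gt0 ?subr_gt0 // ltr_pwDr. Qed.

Lemma good_of_near_sample n w i : enorm (Z n w - Zs n i w) < delta -> good n w.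
Proof.
move=> zy_lt; rewrite /good /=.
set f := fun x => Inv n (fun i => Zs n i w) (G x).
set z := Z n w; set y := Zs n i w.
have -> : f z - z = (f z - f y) + ((f y - y) + (y - z)) by rewrite -!addrA !addKr.
apply: le_lt_trans (ler_enormD _ _) _.
apply: le_lt_trans (lerD (lexx _) (ler_enormD _ _)) _.
have Lip : enorm (f z - f y) <= L * enorm (z - y) := Inv_lipschitz n w z y.
have train : enorm (f y - y) < eps := Inv_train n w i.
have deltaE : delta * (L + 1) = eps' - eps by rewrite divfK // gt_eqF // ltr_pwDr.
have : L * enorm (z - y) <= L * delta by rewrite ler_wpM2l // ltW.
move: (enorm_ge0 (z - y)) zy_lt; rewrite (enorm_distrC y z); nra.
Qed.

Definition samples n := all_samples (Zs n) (Z n).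
Definition cube (M : R) : 'I_d -> set R := fun=> `[- M, M[%classic.
Definition side (M : R) (m : nat) : R := 2 * M / m%:R.
Definition cell (M : R) (m : nat) (c : {ffun 'I_d -> 'I_m}) : 'I_d -> set R :=
  fun k => `[- M + (c k)%:R * side M m, - M + (c k).+1%:R * side M m[%classic.
Definition outside_cube n M := ~` pattern (box_event (samples n) (cube M)) [:: None] [::].
Definition lonely_cell n M m (c : {ffun 'I_d -> 'I_m}) :=
  pattern (box_event (samples n) (cell M m c)) [:: None] (map Some (enum 'I_n)).

Lemma side_gt0 M m : 0 < M -> 0 < side M m.+1.
Proof. by move=> M0; rewrite divr_gt0 // mulr_gt0. Qed.

Lemma bad_subset n M m : 0 < M -> d%:R * side M m.+1 < delta ->
  ~` good n `<=` outside_cube n M `|`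
     \big[setU/set0]_(c : {ffun 'I_d -> 'I_m.+1}) lonely_cell n M m.+1 c.
Proof.
move=> M0 side_lt w /= bad.
have [z_in|] := pselect (pattern (box_event (samples n) (cube M)) [:: None] [::] w); last by left.
right.
have side0 := side_gt0 M m M0.
have mside : - M + m.+1%:R * side M m.+1 = M.
  by rewrite /side mulrCA divff ?mulr1 ?pnatr_eq0 //; lra.
have /choice [c z_c] : forall k, exists i : 'I_m.+1,
    - M + i%:R * side M m.+1 <= Z n w ord0 k < - M + i.+1%:R * side M m.+1.
  move=> k; apply: mem_subinterval => //; rewrite mside.
  by have := z_in.1 None (mem_head _ _) k; rewrite /cube /= in_itv.
rewrite (bigD1 [ffun k => c k]) //=; left; split.
  by move=> j; rewrite mem_seq1 => /eqP -> k; rewrite /cell ffunE /= in_itv z_c.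
move=> j /mapP [i _ ->] zi_c; apply: bad; apply: (@good_of_near_sample n w i).
apply: le_lt_trans side_lt; apply: enorm_le_coord; first exact: ltW.
move=> k; rewrite !mxE.
have := z_c k; have := zi_c k; rewrite /cell /= ffunE in_itv /= -natr1 mulrDl mul1r addrA.
move=> /andP[y1 y2] /andP[x1 x2]; rewrite ler_norml; apply/andP; split; lra.
Qed.

Lemma prob_outside_cube n M :
  P (outside_cube n M) = (1 - fine (normal_prob 0 1 `[- M, M[%classic) ^+ d)%:E.
Proof.
have mcube k : measurable (cube M k) by exact: measurable_itv.
rewrite /outside_cube probability_setC; last first.
  exact: pattern_measurable (box_event_measurable (samples_iid n) mcube) _ _.
rewrite (pattern_prob (box_event_measurable (samples_iid n) mcube) _
  (box_event_hits (samples_iid n) mcube) [::] [:: None]) //.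
by rewrite /gaussian_box_prob /cube /= expr1 expr0 mulr1 prodr_const card_ord EFinB.
Qed.

Lemma prob_lonely_cell_le n M m c : (P (lonely_cell n M m c) <= (n.+1%:R^-1)%:E)%E.
Proof.
have mcell k : measurable (cell M m c k) by exact: measurable_itv.
have uniq_samples : uniq ([:: None] ++ map Some (enum 'I_n)).
  rewrite /= map_inj_uniq ?enum_uniq; last by move=> ? ? [].
  by rewrite andbT; apply/negP => /mapP [].
rewrite (pattern_prob (box_event_measurable (samples_iid n) mcell) _
  (box_event_hits (samples_iid n) mcell) _ _ uniq_samples).
rewrite lee_fin expr1 size_map size_enum_ord.
exact/mul_exprBr_le_invS/gaussian_box_prob01.
Qed.

Lemma bad_prob_le n M m : 0 < M -> d%:R * side M m.+1 < delta ->
  1 - fine (P (good n)) <= (1 - fine (normal_prob 0 1 `[- M, M[%classic) ^+ d)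
    + #|{ffun 'I_d -> 'I_m.+1}|%:R / n.+1%:R.
Proof.
move=> M0 side_lt.
have mcell c k : measurable (cell M m.+1 c k) by exact: measurable_itv.
have mlonely c : measurable (lonely_cell n M m.+1 c).
  exact: pattern_measurable (box_event_measurable (samples_iid n) (mcell c)) _ _.
have mout : measurable (outside_cube n M).
  apply: measurableC; apply: pattern_measurable; apply: box_event_measurable => //.
  by move=> k; exact: measurable_itv.
set U := \big[setU/set0]_c lonely_cell n M m.+1 c.
have mU : measurable U by apply: bigsetU_measurable => c _; exact: mlonely.
have union_bound : (P (~` good n) <= P (outside_cube n M) + P U)%E.
  apply: le_trans (measureU2 P mout mU).
  apply: le_measure; rewrite ?inE; [exact: measurableC|exact: measurableU|].
  exact: bad_subset.
have U_le : (P U <= (#|{ffun 'I_d -> 'I_m.+1}|%:R / n.+1%:R)%:E)%E.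
  apply: le_trans (measure_bigsetU_le P _ mlonely) _.
  have : (\sum_c P (lonely_cell n M m.+1 c) <=
      \sum_(c : {ffun 'I_d -> 'I_m.+1}) (n.+1%:R^-1)%:E)%E.
    by apply: lee_sum => c _; exact: prob_lonely_cell_le.
  by move/le_trans; apply; rewrite sumEFin sumr_const lee_fin mulr_natl.
rewrite -lee_fin EFinB EFinD fineK ?fin_num_measure // -probability_setC //.
by rewrite (le_trans union_bound) // prob_outside_cube leeD.
Qed.

Lemma good_prob_cvg1 : (fun n => P (good n)) @ \oo --> 1%E.
Proof.
apply: cvg_EFin; first by near=> n; exact: fin_num_measure.
apply: cvg_to1_of_deficit_le => [n|e e0].
  by rewrite -lee_fin fineK ?fin_num_measure // probability_le1.
have /cvgrPdist_le /(_ (e / d%:R)) := normal_prob_itv_cvg1 R.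
rewrite divr_gt0 ?ltr0n // => /(_ isT) [N _ rN].
set M : R := N.+1%:R; set r := fine (normal_prob 0 1 `[- M, M[%classic).
have M0 : 0 < M by rewrite ltr0n.
have r01 : 0 <= r <= 1 by apply: normal_prob_fine_01; exact: measurable_itv.
have r_near1 : 1 - r <= e / d%:R.
  by move: (rN N.+1 (leqnSn N)); rewrite ler_norml => /andP[].
set m := Num.truncn (d%:R * (2 * M) / delta).
have side_lt : d%:R * side M m.+1 < delta.
  have := truncnS_gt (d%:R * (2 * M) / delta).
  rewrite -/m ltr_pdivrMr ?delta_gt0 // => m_gt.
  by rewrite /side mulrA ltr_pdivrMr ?ltr0n //; lra.
exists (1 - r ^+ d), #|{ffun 'I_d -> 'I_m.+1}|%:R; split.
  apply: le_trans (subr1_exprn_le _ d r01) _.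
  by rewrite -ler_pdivlMl ?ltr0n // mulrC.
by move=> n; exact: bad_prob_le.
Unshelve. all: by end_near.
Qed.

End ApproximateInversion.

Theorem theorem1
  (R : realType) (d : nat) (X : normedModType R)
  (G : 'rV[R]_d -> X)
  (L eps eps' : R)
  (dT : measure_display) (T : measurableType dT) (P : probability T R)
  (Zs : forall n : nat, 'I_n -> T -> 'rV[R]_d)
  (Z : nat -> T -> 'rV[R]_d)
  (Inv : forall n : nat, ('I_n -> 'rV[R]_d) -> X -> 'rV[R]_d) :
  (0 < d)%N ->
  0 <= L -> 0 < eps -> eps < eps' ->
  (forall n, iid_std_gaussian_vectors P (all_samples (Zs n) (Z n))) ->
  (forall n (w : T) (x y : 'rV[R]_d),
      enorm (Inv n (fun i => Zs n i w) (G x) - Inv n (fun i => Zs n i w) (G y))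
        <= L * enorm (x - y)) ->
  (forall n (w : T) (i : 'I_n),
      enorm (Inv n (fun i => Zs n i w) (G (Zs n i w)) - Zs n i w) < eps) ->
  (forall n, measurable
     [set w | enorm (Inv n (fun i => Zs n i w) (G (Z n w)) - Z n w) < eps']) ->
  (fun n => P [set w | enorm (Inv n (fun i => Zs n i w) (G (Z n w)) - Z n w) < eps'])
    @ \oo --> 1%E.
Proof.
move=> d_gt0 L_ge0 _ eps_lt iid lip train mgood.
exact: good_prob_cvg1 d_gt0 L_ge0 eps_lt iid lip train mgood.
Qed.
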